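(* Let $(X,d^\star)$ be a $\star$-metric space and $A\subseteq X$. Then the closure of $A$ in $(X,\mathscr{T}_{d^\star})$ equals $\{x\in X: D(A,x)=0\}$.
   Context: A $t$-definer is a function $\star:[0,\infty)\times[0,\infty)\to[0,\infty)$ such that for all $a,b,c\ge 0$: $a\star b=b\star a$; $a\star(b\star c)=(a\star b)\star c$; if $a\le b$ then $a\star c\le b\star c$; $a\star 0=a$; and $\star$ is continuous in its first variable with respect to the Euclidean topology. Given a nonempty set $X$ and a $t$-definer $\star$, a $\star$-metric on $X$ is a function $d^\star:X\times X\to[0,\infty)$ such that for all $x,y,z\in X$: $d^\star(x,y)=0$ iff $x=y$; $d^\star(x,y)=d^\star(y,x)$; and $d^\star(x,y)\le d^\star(x,z)\star d^\star(z,y)$. Put $B_{d^\star}(a,r)=\{x\in X: d^\star(a,x)<r\}$ and let $\mathscr{T}_{d^\star}$ be the topology consisting of all $U\subseteq X$ such that for each $a\in U$ some $B_{d^\star}(a,r)$, $r>0$, is contained in $U$. The distance from a point to a set is $D(A,x)=D(x,A)=\inf_{y\in A}d^\star(x,y)$ if $A\ne\emptyset$, and $D(\emptyset,x)=1$. *)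

From HB Require Import structures.
From mathcomp Require Import all_boot all_order all_algebra.
From mathcomp Require Import all_classical all_reals.
Set Implicit Arguments. Unset Strict Implicit. Unset Printing Implicit Defensive.
Import Order.TTheory GRing.Theory Num.Theory.
Local Open Scope classical_set_scope.
Local Open Scope ring_scope.

(* A t-definer: a map [0,oo) x [0,oo) -> [0,oo), represented as a function
   R -> R -> R whose behaviour is only constrained on nonnegative arguments. *)
Definition t_definer {R : realType} (star : R -> R -> R) : Prop :=
  (forall a b, 0 <= a -> 0 <= b -> 0 <= star a b) /\
  (forall a b, 0 <= a -> 0 <= b -> star a b = star b a) /\
  (forall a b c, 0 <= a -> 0 <= b -> 0 <= c ->
      star a (star b c) = star (star a b) c) /\
  (forall a b c, 0 <= a -> 0 <= b -> 0 <= c -> a <= b -> star a c <= star b c) /\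
  (forall a, 0 <= a -> star a 0 = a) /\
  (forall b a, 0 <= b -> 0 <= a -> forall e : R, 0 < e ->
      exists2 del : R, 0 < del & forall a', 0 <= a' -> `|a' - a| < del ->
        `|star a' b - star a b| < e).

Definition star_metric {R : realType} {X : Type} (star : R -> R -> R)
    (d : X -> X -> R) : Prop :=
  (forall x y, 0 <= d x y) /\
  (forall x y, d x y = 0 <-> x = y) /\
  (forall x y, d x y = d y x) /\
  (forall x y z, d x y <= star (d x z) (d z y)).

Definition sball {R : realType} {X : Type} (d : X -> X -> R) (a : X) (r : R)
  : set X := [set x | d a x < r].

Definition sopen {R : realType} {X : Type} (d : X -> X -> R) (U : set X) : Prop :=
  forall a, U a -> exists2 r : R, 0 < r & sball d a r `<=` U.

Definition sclosed {R : realType} {X : Type} (d : X -> X -> R) (F : set X) : Prop :=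
  sopen d (~` F).

Definition sclosure {R : realType} {X : Type} (d : X -> X -> R) (A : set X)
  : set X := [set x | forall F, sclosed d F -> A `<=` F -> F x].

(* Distance from a point to a set; D(emptyset, x) = 1. *)
Definition Dist {R : realType} {X : Type} (d : X -> X -> R) (A : set X) (x : X)
  : R :=
  if pselect (A !=set0) then inf [set d x y | y in A] else 1.

From HB Require Import structures.
From mathcomp Require Import all_boot all_order all_algebra.
From mathcomp Require Import all_classical all_reals.
Import Order.TTheory GRing.Theory Num.Theory.
Local Open Scope classical_set_scope.
Local Open Scope ring_scope.

(* D(A, x) = 0 exactly when every ball around x meets A, so every closed
   superset of A contains {x | D(A, x) = 0}.  Conversely this set contains A
   and is closed: a t-definer is jointly small near (0, 0) (monotonicity, plus
   continuity in the first variable at 0 where 0 star b = b), so if D(A, z) > 0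
   then every w in a small ball around z has D(A, w) > 0, because
   D(A, z) <= d(z, y) <= d(z, w) star d(w, y) for all y in A. *)

Lemma t_definer_lt_near0 {R : realType} {star : R -> R -> R} :
  t_definer star -> forall e : R, 0 < e -> exists2 eta : R, 0 < eta &
    forall a c, 0 <= a -> 0 <= c -> a < eta -> c < eta -> star a c < e.
Proof.
move=> [_ [starC [_ [starMl [star0 star_cont]]]]] e e_gt0.
have e2_gt0 : 0 < e / 2 by rewrite divr_gt0.
have e2_ge0 := ltW e2_gt0.
have [del del_gt0 near0] := star_cont (e / 2) 0 e2_ge0 (lexx _) _ e2_gt0.
have star_e2 c : 0 <= c -> c < del -> star c (e / 2) < e.
  move=> c_ge0 c_lt; have := near0 c c_ge0.
  rewrite subr0 ger0_norm // (starC 0) ?lexx // star0 // => /(_ c_lt).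
  by move=> /(le_lt_trans (ler_norm _)); rewrite ltrBlDr -splitr.
exists (Num.min del (e / 2)); first by rewrite lt_min del_gt0 e2_gt0.
move=> a c a_ge0 c_ge0; rewrite !lt_min => /andP[_ a_lt] /andP[c_lt _].
apply: le_lt_trans (starMl a (e / 2) c a_ge0 e2_ge0 c_ge0 (ltW a_lt)) _.
by rewrite starC //; apply: star_e2.
Qed.

Lemma sclosed_adherent {R : realType} {X : Type} (d : X -> X -> R) (F : set X) x :
  sclosed d F -> (forall r, 0 < r -> exists2 y, F y & d x y < r) -> F x.
Proof.
move=> F_closed adh; apply: contrapT => nFx.
have [r r_gt0 ball_nF] := F_closed x nFx.
have [y Fy xy_lt] := adh r r_gt0.
exact: ball_nF y xy_lt Fy.
Qed.

Section PointSetDistance.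
Context {R : realType} {X : Type} {d : X -> X -> R} (A : set X).
Hypothesis d_ge0 : forall x y, 0 <= d x y.

Let dist_lbound x : lbound [set d x y | y in A] 0.
Proof. by move=> _ [y _ <-]. Qed.

Lemma Dist_ge0 x : 0 <= Dist d A x.
Proof.
rewrite /Dist; case: pselect => /= [An|_]; last exact: ler01.
by apply: lb_le_inf; [exact: image_nonempty | exact: dist_lbound].
Qed.

Lemma Dist_le x y : A y -> Dist d A x <= d x y.
Proof.
move=> Ay; rewrite /Dist; case: pselect => /= [_|nA]; last by case: nA; exists y.
by apply: ge_inf; [exists 0; exact: dist_lbound | exists y].
Qed.

Lemma Dist_eq0P x :
  Dist d A x = 0 <-> forall r, 0 < r -> exists2 y, A y & d x y < r.
Proof.
split.
- rewrite /Dist; case: pselect => /= [An inf0 r r_gt0|_ /eqP]; last by rewrite oner_eq0.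
  have : inf [set d x y | y in A] < r by rewrite inf0.
  by move=> /(inf_lt (image_nonempty _ An))[_ [y Ay <-] xy_lt]; exists y.
- move=> near; apply/eqP; rewrite eq_le Dist_ge0 andbT leNgt; apply/negP => Dx_gt0.
  have [y Ay] := near _ Dx_gt0.
  by rewrite ltNge Dist_le.
Qed.

Lemma Dist_eq0_mem y : d y y = 0 -> A y -> Dist d A y = 0.
Proof.
move=> dyy0 Ay; apply/eqP; rewrite eq_le Dist_ge0 andbT.
by rewrite -dyy0 Dist_le.
Qed.

End PointSetDistance.

Lemma sclosed_Dist_eq0 {R : realType} {X : Type} {star : R -> R -> R}
    {d : X -> X -> R} (A : set X) :
  t_definer star -> star_metric star d -> sclosed d [set x | Dist d A x = 0].
Proof.
move=> t_star [d_ge0 [_ [_ d_tri]]] z /= Dz_neq0.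
have Dz_gt0 : 0 < Dist d A z by rewrite lt_def Dist_ge0 // andbT; apply/eqP.
have [eta eta_gt0 star_lt] := t_definer_lt_near0 t_star _ Dz_gt0.
exists eta => // w /= zw_lt /(Dist_eq0P A d_ge0)/(_ _ eta_gt0)[y Ay wy_lt].
have := le_trans (Dist_le A d_ge0 z y Ay) (d_tri z y w).
by rewrite leNgt star_lt.
Qed.

Theorem proposition4p7 (R : realType) (X : Type) (star : R -> R -> R)
  (d : X -> X -> R) (A : set X) :
  t_definer star -> star_metric star d ->
  sclosure d A = [set x | Dist d A x = 0].
Proof.
move=> t_star d_metric; have [d_ge0 [d_eq0 _]] := d_metric.
rewrite eqEsubset; split => x /=.
- move=> x_cl; apply: (x_cl _ (sclosed_Dist_eq0 A t_star d_metric)).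
  by move=> y Ay; apply: Dist_eq0_mem => //; apply/d_eq0.
- move=> /(Dist_eq0P A d_ge0) adh F F_closed AF.
  apply: sclosed_adherent F_closed _ => r /adh[y /AF Fy xy_lt].
  by exists y.
Qed.
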